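(* Let $P$ be a finite point set in $\mathbb{R}^d$, let $s>0$, and let $A,B\subseteq P$ be such that $\{A,B\}$ is an $s$-well-separated pair with $|B|\geq 2$. (1) For any point $a\in A$ and any two distinct points $b,c\in B$, $|\Delta_{abc}|\leq (1+2/s)\,|\Delta^*(a,b)|$. (2) Assume additionally $|A|\geq 2$. For any two points $a,a'\in A$ and any two points $b,b'\in B$, $|\Delta^*(a,b)|\leq (1+8/s)\,|\Delta^*(a',b')|$.
   Context: Distances are Euclidean. Two point sets $A$ and $B$ form an $s$-well-separated pair if $A$ and $B$ can each be covered by a ball of the same radius $\rho$ such that the distance between the two balls is at least $s\cdot\rho$. $|\Delta_{abc}|=|ab|+|bc|+|ca|$ is the perimeter of the triangle on $a,b,c$. For distinct $p,q\in P$, $\Delta^*(p,q)$ is the minimum-perimeter triangle $\Delta_{pqx}$ over $x\in P\setminus\{p,q\}$. *)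

From HB Require Import structures.
From mathcomp Require Import all_boot all_order all_algebra.
From mathcomp Require Import finmap.
Set Implicit Arguments. Unset Strict Implicit. Unset Printing Implicit Defensive.
Import Order.TTheory GRing.Theory Num.Theory.
Local Open Scope ring_scope.
Local Open Scope fset_scope.

Definition edist (R : rcfType) (d : nat) (p q : 'rV[R]_d) : R :=
  Num.sqrt (\sum_(i < d) (p 0 i - q 0 i) ^+ 2).

Definition perim (R : rcfType) (d : nat) (a b c : 'rV[R]_d) : R :=
  edist a b + edist b c + edist c a.

Definition covered_by_ball (R : rcfType) (d : nat) (X : {fset 'rV[R]_d})
  (c : 'rV[R]_d) (rho : R) : Prop :=
  forall x, x \in X -> edist c x <= rho.

Definition well_separated (R : rcfType) (d : nat) (s : R)
  (A B : {fset 'rV[R]_d}) : Prop :=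
  exists (rho : R) (c1 c2 : 'rV[R]_d),
    0 <= rho /\ covered_by_ball A c1 rho /\ covered_by_ball B c2 rho /\
    (forall x y, edist c1 x <= rho -> edist c2 y <= rho -> s * rho <= edist x y).

(* minimum of a finite list of reals (0 on the empty list; never used there) *)
Definition minlist (R : rcfType) (l : seq R) : R :=
  match l with [::] => 0 | h :: t => foldr Num.min h t end.

Definition tri_star (R : rcfType) (d : nat) (P : {fset 'rV[R]_d}) (p q : 'rV[R]_d) : R :=
  minlist [seq perim p q x | x <- enum_fset (P `\` [fset p; q])].

(* The two balls of a well-separated pair have a common radius rho, so both
   sides have diameter at most 2 rho while every A-B distance is at least
   s rho; hence, for a in A and b in B, rho <= |ab| / s.  Since |B| >= 2 there
   is always a third point c in B, which gives both Delta*(a,b) <= |Delta_abc|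
   and |Delta*(a,b)| >= 2 |ab| (triangle inequality).  Then
   |Delta_abc| <= 2|ab| + 2|bc| <= 2|ab| + 4 rho <= (1 + 2/s) 2|ab|, and moving
   from (a,b) to (a',b') costs at most another 8 rho. *)

From HB Require Import structures.
From mathcomp Require Import all_boot all_order all_algebra.
From mathcomp Require Import finmap.
From mathcomp Require Import ring lra.
Import Order.TTheory GRing.Theory Num.Theory.
Local Open Scope ring_scope.

Lemma sum_sqr_ge0 {R : realDomainType} {I : finType} (x : I -> R) :
  0 <= \sum_i x i ^+ 2.
Proof. by apply: sumr_ge0 => i _; exact: sqr_ge0. Qed.

Lemma lagrange_identity (R : comPzRingType) (I : finType) (x y : I -> R) :
  \sum_i \sum_j (x i * y j - x j * y i) ^+ 2 =
  ((\sum_i x i ^+ 2) * (\sum_j y j ^+ 2) - (\sum_i x i * y i) ^+ 2) *+ 2.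
Proof.
transitivity (\sum_i \sum_j (x i ^+ 2 * y j ^+ 2 + x j ^+ 2 * y i ^+ 2
                             - (x i * y i * (x j * y j)) *+ 2)).
  by apply: eq_bigr => i _; apply: eq_bigr => j _; ring.
under eq_bigr do rewrite sumrB big_split sumrMnl /=.
rewrite sumrB big_split sumrMnl /= [X in _ + X - _]exchange_big /=.
by rewrite expr2 !big_distrlr /=; ring.
Qed.

Lemma sum_mul_sqr_le (R : realDomainType) (I : finType) (x y : I -> R) :
  (\sum_i x i * y i) ^+ 2 <= (\sum_i x i ^+ 2) * (\sum_i y i ^+ 2).
Proof.
have : 0 <= \sum_i \sum_j (x i * y j - x j * y i) ^+ 2.
  by do 2![apply: sumr_ge0 => ? _]; exact: sqr_ge0.
by rewrite lagrange_identity pmulrn_lge0 // subr_ge0.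
Qed.

Section Minkowski.
Context {R : rcfType} {I : finType}.
Implicit Types x y : I -> R.

Lemma cauchy_schwarz x y :
  \sum_i x i * y i <= Num.sqrt (\sum_i x i ^+ 2) * Num.sqrt (\sum_i y i ^+ 2).
Proof.
rewrite -sqrtrM ?sum_sqr_ge0 //; apply: le_trans (ler_norm _) _.
by rewrite -sqrtr_sqr ler_sqrt ?sum_mul_sqr_le ?mulr_ge0 ?sum_sqr_ge0.
Qed.

Lemma minkowski x y :
  Num.sqrt (\sum_i (x i + y i) ^+ 2) <=
  Num.sqrt (\sum_i x i ^+ 2) + Num.sqrt (\sum_i y i ^+ 2).
Proof.
have expand : \sum_i (x i + y i) ^+ 2 =
    \sum_i x i ^+ 2 + \sum_i y i ^+ 2 + 2 * \sum_i x i * y i.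
  by rewrite mulr_sumr -!big_split; apply: eq_bigr => i _ /=; ring.
rewrite -[leRHS]ger0_norm ?addr_ge0 ?sqrtr_ge0 // -sqrtr_sqr.
rewrite ler_sqrt ?sqr_ge0 // expand sqrrD !sqr_sqrtr ?sum_sqr_ge0 //.
have := cauchy_schwarz x y; lra.
Qed.

End Minkowski.

Section EuclideanDistance.
Context {R : rcfType} {d : nat}.
Implicit Types p q r : 'rV[R]_d.

Lemma edist_ge0 p q : 0 <= edist p q.
Proof. exact: sqrtr_ge0. Qed.

Lemma edistC p q : edist p q = edist q p.
Proof.
by rewrite /edist; congr Num.sqrt; apply: eq_bigr => i _; rewrite -sqrrN opprB.
Qed.

Lemma edistxx p : edist p p = 0.
Proof. by rewrite /edist big1 ?sqrtr0 // => i _; rewrite subrr expr0n. Qed.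

Lemma edist_le0 p q : edist p q <= 0 -> p = q.
Proof.
move=> le0; have : edist p q == 0 by rewrite eq_le le0 edist_ge0.
rewrite /edist sqrtr_eq0 => sum_le0.
have : \sum_i (p 0 i - q 0 i) ^+ 2 == 0 by rewrite eq_le sum_le0 sum_sqr_ge0.
rewrite psumr_eq0 => [/allP sum0|i _]; last exact: sqr_ge0.
apply/rowP => i; apply/eqP; rewrite -subr_eq0 -sqrf_eq0.
exact: sum0 (mem_index_enum i).
Qed.

Lemma edist_triangle p q r : edist p r <= edist p q + edist q r.
Proof.
have split i : p 0 i - r 0 i = (p 0 i - q 0 i) + (q 0 i - r 0 i).
  by rewrite addrA subrK.
by rewrite /edist; under eq_bigr => i _ do rewrite split; exact: minkowski.
Qed.

Lemma two_edist_le_perim p q r : 2 * edist p q <= perim p q r.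
Proof.
by have := edist_triangle p r q; rewrite /perim (edistC r p) (edistC r q); lra.
Qed.

Lemma perim_le p q r : perim p q r <= 2 * edist p q + 2 * edist q r.
Proof. by have := edist_triangle p q r; rewrite /perim (edistC r p); lra. Qed.

Lemma covered_by_ball_diam {X : {fset 'rV[R]_d}} {c : 'rV[R]_d} {rho : R} :
  covered_by_ball X c rho -> {in X &, forall x y, edist x y <= 2 * rho}.
Proof.
move=> cover x y /cover cx /cover cy.
by have := edist_triangle x c y; rewrite (edistC x c); lra.
Qed.

End EuclideanDistance.

Local Open Scope fset_scope.

Section MinimumPerimeter.
Context {R : rcfType}.

Lemma minlist_le (l : seq R) y : y \in l -> minlist l <= y.
Proof.
case: l => // h t /=; elim: t => [|z t IH] /=; first by rewrite inE => /eqP ->.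
rewrite ge_min !inE => /or3P[/eqP yh | /eqP-> | yt].
- by rewrite IH ?orbT // yh mem_head.
- by rewrite lexx.
- by rewrite IH ?orbT // inE yt orbT.
Qed.

Lemma minlist_mem (l : seq R) : l != [::] -> minlist l \in l.
Proof.
case: l => // h t _ /=; elim: t => [|z t IH] /=; first by rewrite inE.
rewrite /Order.min; case: ifP => _; first by rewrite !inE eqxx orbT.
by move: IH; rewrite !inE => /orP[->|->]; rewrite ?orbT.
Qed.

Context {d : nat} {P : {fset 'rV[R]_d}}.
Implicit Types p q c : 'rV[R]_d.

Lemma third_point_mem p q c :
  c \in P -> c != p -> c != q -> c \in P `\` [fset p; q].
Proof. by move=> cP cp cq; rewrite in_fsetD in_fset2 negb_or cp cq cP. Qed.

Lemma tri_star_le_perim p q c :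
  c \in P -> c != p -> c != q -> tri_star P p q <= perim p q c.
Proof. by move=> cP cp cq; apply/minlist_le/map_f/third_point_mem. Qed.

Lemma two_edist_le_tri_star p q c :
  c \in P -> c != p -> c != q -> 2 * edist p q <= tri_star P p q.
Proof.
move=> cP cp cq; rewrite /tri_star; set l := map _ _.
have cl : perim p q c \in l by exact/map_f/third_point_mem.
have /minlist_mem/mapP[x _ ->] : l != [::] by case: (l) cl.
exact: two_edist_le_perim.
Qed.

End MinimumPerimeter.

Lemma exists_fset_neq {K : choiceType} {X : {fset K}} x :
  (1 < #|` X|)%N -> exists2 y, y \in X & y != x.
Proof.
move=> X_gt1; have /fset0Pn[y /fsetD1P[yx yX]] : X `\ x != fset0.
  apply: contraTneq X_gt1 => X0.
  by rewrite (cardfsD1 x) X0 cardfs0 addn0; case: (x \in X).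
by exists y.
Qed.

Section WellSeparatedPair.
Context {R : rcfType} {d : nat} {P A B : {fset 'rV[R]_d}} {s rho : R}.
Hypotheses (s_gt0 : 0 < s) (BP : B `<=` P) (B_gt1 : (1 < #|` B|)%N).
Hypotheses (diamA : {in A &, forall x y, edist x y <= 2 * rho})
           (diamB : {in B &, forall x y, edist x y <= 2 * rho})
           (sepAB : {in A & B, forall x y, s * rho <= edist x y}).

Lemma rho_le_edist_div {a b : 'rV[R]_d} :
  a \in A -> b \in B -> rho <= edist a b / s.
Proof. by move=> aA bB; rewrite ler_pdivlMr // mulrC sepAB. Qed.

(* A common point of A and B forces rho <= 0, which collapses B to a point. *)
Lemma sep_neq {a b c : 'rV[R]_d} :
  a \in A -> b \in B -> c \in B -> b != c -> c != a.
Proof.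
move=> aA bB cB; apply: contraNneq => ca.
have : s * rho <= 0 by rewrite -(edistxx a) sepAB // -ca.
rewrite pmulr_rle0 // => rho_le0.
by apply/eqP/edist_le0; have := diamB _ _ bB cB; lra.
Qed.

Lemma two_edist_le_tri_star_sep {a b : 'rV[R]_d} :
  a \in A -> b \in B -> 2 * edist a b <= tri_star P a b.
Proof.
move=> aA bB; have [c cB cb] := exists_fset_neq b B_gt1.
apply: (two_edist_le_tri_star _ _ _ (fsubsetP BP _ cB)) => //.
by apply: sep_neq aA bB cB _; rewrite eq_sym.
Qed.

Lemma perim_le_sep {a b c : 'rV[R]_d} :
  a \in A -> b \in B -> c \in B -> perim a b c <= (1 + 2 / s) * (2 * edist a b).
Proof.
move=> aA bB cB; have := perim_le a b c; have := diamB _ _ bB cB.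
have := rho_le_edist_div aA bB.
have -> : ((1 + 2 / s) * (2 * edist a b)
    = 2 * edist a b + 4 * (edist a b / s))%R.
  by field; rewrite gt_eqF.
lra.
Qed.

Lemma perim_le_sep_far {a a' b b' c : 'rV[R]_d} :
  a \in A -> a' \in A -> b \in B -> b' \in B -> c \in B ->
  perim a b c <= (1 + 8 / s) * (2 * edist a' b').
Proof.
move=> aA a'A bB b'B cB; have := perim_le a b c; have := diamB _ _ bB cB.
have := edist_triangle a a' b; have := edist_triangle a' b' b.
have := diamA _ _ aA a'A; have := diamB _ _ b'B bB.
have := rho_le_edist_div a'A b'B.
have : 0 <= edist a' b' / s by rewrite divr_ge0 ?edist_ge0 ?ltW.
have -> : ((1 + 8 / s) * (2 * edist a' b')
    = 2 * edist a' b' + 16 * (edist a' b' / s))%R.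
  by field; rewrite gt_eqF.
lra.
Qed.

Lemma perim_le_tri_star_sep {a b c : 'rV[R]_d} :
  a \in A -> b \in B -> c \in B ->
  perim a b c <= (1 + 2 / s) * tri_star P a b.
Proof.
move=> aA bB cB; apply: le_trans (perim_le_sep aA bB cB) _.
by rewrite ler_wpM2l ?two_edist_le_tri_star_sep // addr_ge0 ?divr_ge0 ?ltW.
Qed.

Lemma tri_star_le_sep {a a' b b' : 'rV[R]_d} :
  a \in A -> a' \in A -> b \in B -> b' \in B ->
  tri_star P a b <= (1 + 8 / s) * tri_star P a' b'.
Proof.
move=> aA a'A bB b'B; have [c cB cb] := exists_fset_neq b B_gt1.
have ca : c != a by apply: sep_neq aA bB cB _; rewrite eq_sym.
apply: le_trans (tri_star_le_perim _ _ _ (fsubsetP BP _ cB) ca cb) _.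
apply: le_trans (perim_le_sep_far aA a'A bB b'B cB) _.
by rewrite ler_wpM2l ?two_edist_le_tri_star_sep // addr_ge0 ?divr_ge0 ?ltW.
Qed.

End WellSeparatedPair.

Theorem lemma6 (R : rcfType) (d : nat) (P A B : {fset 'rV[R]_d}) (s : R)
  (hs : 0 < s) (hAP : A `<=` P) (hBP : B `<=` P)
  (hws : well_separated s A B) (hB : (1 < #|` B|)%N) :
  (forall a b c, a \in A -> b \in B -> c \in B -> b != c ->
     perim a b c <= (1 + 2 / s) * tri_star P a b) /\
  ((1 < #|` A|)%N ->
   forall a a' b b', a \in A -> a' \in A -> b \in B -> b' \in B ->
     tri_star P a b <= (1 + 8 / s) * tri_star P a' b').
Proof.
case: hws => rho [c1 [c2 [_ [coverA [coverB sep]]]]].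
have sepAB : {in A & B, forall x y, s * rho <= edist x y}.
  by move=> x y /coverA + /coverB; exact: sep.
have diamA := covered_by_ball_diam coverA.
have diamB := covered_by_ball_diam coverB.
split => [a b c aA bB cB _ | _ a a' b b'].
- exact: (perim_le_tri_star_sep hs hBP hB diamB sepAB aA bB cB).
- exact: (tri_star_le_sep hs hBP hB diamA diamB sepAB).
Qed.
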